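(* Let $r\in\mathbb{N}$ and $w,v\in\mathbb{YF}^r$. Write $\underline{x}=s(x)$ and $h=h(w,v)$. 1) If $\mathbb{1}_{w,v}=1$, then $$d_r(w,v)=\sum_{l=0}^{h}\big(d_1(\underline{w}[l],\underline{v}[l])-d_1(\underline{w}[l+1],\underline{v}[l+1])\big)\, r^{\#v-\#w-e(v[l])}.$$ 2) If $\mathbb{1}_{w,v}=0$, then $$d_r(w,v)=\sum_{l=0}^{h-1}\big(d_1(\underline{w}[l],\underline{v}[l])-d_1(\underline{w}[l+1],\underline{v}[l+1])\big)\, r^{\#v-\#w-e(v[l])}+d_1(\underline{w_v},\underline{v_w})\, r^{\#v-\#w-e(v_w)}.$$
   Context: Fix $r\in\mathbb{N}$. Words and statistics. Consider finite words over $\{1_1,\dots,1_r,2\}$. A letter $1_i$ is a one with digit value $1$; $2$ is a two with digit value $2$. $|x|$ is the sum of digit values, $\#x$ the number of letters, $e(x)$ the number of ones. The graph $\mathbb{YF}^r$. It is the graded graph on all finite words, graded by $|\cdot|$. From $x$ there is a downward edge to every word obtained by one of two operations: (i) delete the leftmost one; (ii) replace a $2$ lying left of the leftmost one (any $2$ if there are no ones) by $1_i$, with arbitrary $i$. $\mathbb{YF}=\mathbb{YF}^1$ (with $1:=1_1$). $s$ replaces every $1_i$ by $1$. Path counts. $d_r(x,y)$ is the number of downward paths $y=y_n\to\dots\to y_m=x$ with $|y_i|=i$ ($0$ if none); $d_1$ is the count in $\mathbb{YF}$. Suffix notation. $h(w,v)$ is the length (in letters) of the longest common suffix of $w,v$,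 where $1_i\ne1_j$ for $i\neq j$. $w_v$, $v_w$ are $w$, $v$ with that suffix deleted. $\mathbb{1}_{w,v}=1$ if $w_v$ and $v_w$ both end with ones of different indices, else $0$. $x[l]$ is $x$ with its last $l$ letters deleted. *)

From HB Require Import structures.
From mathcomp Require Import all_boot all_order all_algebra.
Set Implicit Arguments. Unset Strict Implicit. Unset Printing Implicit Defensive.

(* Letters of YF^r: [Some i] is the one 1_(i+1) (i : 'I_r), [None] is the two 2. *)
Definition word (r : nat) := seq (option 'I_r).

Section YF.
Variable r : nat.
Implicit Types x y w v : word r.

(* digit value, |x|, #x = size x, e(x) *)
Definition dval (a : option 'I_r) : nat := if a is Some _ then 1 else 2.
Definition weight x : nat := sumn (map dval x).
Definition nones x : nat := count (fun a : option 'I_r => a != None) x.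

Definition lpos x : nat := find (fun a : option 'I_r => a != None) x.

Definition del_one x : seq (word r) :=
  if lpos x < size x then [:: take (lpos x) x ++ drop (lpos x).+1 x] else [::].

Definition repl_two x : seq (word r) :=
  [seq set_nth None x j (Some i) | j <- iota 0 (lpos x), i <- enum 'I_r].

Definition down x : seq (word r) := del_one x ++ repl_two x.

(* number of downward paths from y to x (each edge lowers the grade by 1;
   fuel = |y| suffices) *)
Fixpoint dcount (fuel : nat) x y : nat :=
  if y == x then 1 else
  if fuel is f.+1 then sumn [seq dcount f x z | z <- down y] else 0.

Definition d x y : nat := dcount (weight y) x y.

Fixpoint lcp (s t : word r) : nat :=
  match s, t with
  | a :: s', b :: t' => if a == b then (lcp s' t').+1 else 0
  | _, _ => 0
  end.
Definition h w v : nat := lcp (rev w) (rev v).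

(* x[l]: delete the last l letters *)
Definition cut x (l : nat) : word r := take (size x - l) x.

Definition wsub w v : word r := cut w (h w v).

Definition ind w v : bool :=
  match rev (wsub w v), rev (wsub v w) with
  | Some i :: _, Some j :: _ => i != j
  | _, _ => false
  end.

End YF.

Definition sproj (r : nat) (x : word r) : word 1 :=
  map (omap (fun _ => ord0)) x.

From mathcomp Require Import all_boot all_order all_algebra.
From mathcomp Require Import zify.
Import GRing.Theory Num.Theory.
Set Implicit Arguments. Unset Strict Implicit. Unset Printing Implicit Defensive.

(* Sort the paths from v = y a down to w by their first step acting
   on the last letter a. If there is none, then w = x a and the path is one from
   y to x. Otherwise the prefix has become 2^m at that moment, the step deletes a
   (a one) or turns it into some 1_i (a two), and the path goes on from 2^m or
   2^m 1_i. Hence d(w, y a) = [w = x a] d(x, y) + sum_m d(2^m, y) t(w, m, a),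
   where t counts these continuations, in YF^r and in YF alike. By induction
   on |v|, the theorem for the pairs (2^m, y) and (x', 2^m), where the
   indicator vanishes and the sum telescopes, gives
   d_r(2^m, y) = d_1(2^m, s y) r^(#y - m - e(y)) and
   d_r(x', 2^m) = d_1(s x', 2^m) r^(m - #x'), so the second summand is
   r^(#v - #w - e(v)) times its YF counterpart. The theorem for (w, v) then
   follows from the one for (x, y) when the last letters of w and v agree, and
   directly when they differ. *)

Lemma set_nth_rcons (T : Type) (x0 : T) s a j b : j < size s ->
  set_nth x0 (rcons s a) j b = rcons (set_nth x0 s j b) a.
Proof. by elim: s j => [|c s IH] [|j] //= lt_js; rewrite IH. Qed.

Lemma set_nth_rcons_size (T : Type) (x0 : T) s a b :
  set_nth x0 (rcons s a) (size s) b = rcons s b.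
Proof. by elim: s => [|c s IH] //=; rewrite IH. Qed.

Section Grading.
Variable r : nat.
Implicit Types (a : option 'I_r) (x y z : word r).

Lemma dval_gt0 a : 0 < dval a.
Proof. by case: a. Qed.

Lemma weight_cat x y : weight (x ++ y) = weight x + weight y.
Proof. by rewrite /weight map_cat sumn_cat. Qed.

Lemma weight_rcons x a : weight (rcons x a) = weight x + dval a.
Proof. by rewrite -cats1 weight_cat /weight /= addn0. Qed.

Lemma weight_lt_rcons x a : weight x < weight (rcons x a).
Proof. by rewrite weight_rcons -addn1 leq_add2l dval_gt0. Qed.

Lemma weight_eq0 x : weight x = 0 -> x = [::].
Proof. by case: x => // a x; rewrite /weight /=; have := dval_gt0 a; lia. Qed.

Lemma size_le_weight x : size x <= weight x.
Proof. by elim: x => //= a x; rewrite /weight /=; have := dval_gt0 a; lia. Qed.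

Lemma weight_set_two x j i : nth None x j = None -> j < size x ->
  (weight (set_nth None x j (Some i))).+1 = weight x.
Proof.
elim: x j => [|a x IH] [|j] //=; first by move=> -> _.
by move=> xj_two lt_jx; rewrite /weight /= -addnS; congr (_ + _); exact: IH.
Qed.

Lemma weight_down x z : z \in down x -> (weight z).+1 = weight x.
Proof.
rewrite /down mem_cat => /orP [].
  rewrite /del_one; case: ifP => // lt_px; rewrite inE => /eqP ->.
  rewrite -[in RHS](cat_take_drop (lpos x) x) (drop_nth None lt_px).
  rewrite !weight_cat /weight /= -!/(weight _).
  have : nth None x (lpos x) != None.
    by apply: (@nth_find _ None (fun a => a != None)); rewrite has_find.
  by case: (nth None x (lpos x)) => //= _ _; lia.
rewrite /repl_two => /allpairsP [[j i] [/= + _ ->]].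
rewrite mem_iota add0n => /andP [_ lt_jp].
apply: weight_set_two; first exact/eqP/negbFE/(before_find None lt_jp).
exact: leq_trans lt_jp (find_size _ _).
Qed.

Lemma dcount_eq0 f x y : weight y < weight x -> dcount f x y = 0.
Proof.
elim: f y => [|f IH] y lt_yx /=;
  have /negbTE-> : y != x by apply: contraTneq lt_yx => ->; rewrite ltnn.
  by [].
rewrite sumnE big_map big_seq big1 // => z /weight_down Ez; apply: IH; lia.
Qed.

Lemma d_eq0 x y : weight y < weight x -> d x y = 0.
Proof. exact: dcount_eq0. Qed.

Lemma dcount_fuel f g x y :
  weight y <= f -> weight y <= g -> dcount f x y = dcount g x y.
Proof.
elim: f g y => [|f IH] [|g] y le_yf le_yg //=;
  try by rewrite (@weight_eq0 y) //; lia.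
case: ifP => // _; congr sumn; apply/eq_in_map => z /weight_down Ez.
by apply: IH; lia.
Qed.

Lemma dE x y : d x y = (y == x) + \sum_(z <- down y) d x z.
Proof.
rewrite {1}/d; case y_w0: (weight y) => [|k].
  by rewrite (weight_eq0 y_w0) /= big_nil addn0.
rewrite /= sumnE big_map big_seq [in RHS]big_seq; case: eqP => [->|_].
  by rewrite big1 // => z /weight_down Ez; apply: d_eq0; lia.
by apply: eq_bigr => z /weight_down Ez; apply: dcount_fuel; lia.
Qed.

End Grading.

Section LastLetter.
Variable r : nat.
Implicit Types (a : option 'I_r) (x y z X : word r).

Definition has_one x := has (fun a : option 'I_r => a != None) x.

Definition twos m : word r := nseq m None.

Lemma size_twos m : size (twos m) = m.
Proof. exact: size_nseq. Qed.

Lemma has_one_twos m : has_one (twos m) = false.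
Proof. by elim: m. Qed.

Lemma twos_size y : ~~ has_one y -> y = twos (size y).
Proof. by elim: y => //= -[] //= y IH /IH {1}->. Qed.

Lemma twos_inj : injective twos.
Proof. by move=> m n E; rewrite -(size_twos m) E size_twos. Qed.

Lemma weight_twos m : weight (twos m) = m * 2.
Proof. by elim: m => //= m IH; rewrite /weight /= -/(weight _) IH; lia. Qed.

Lemma sum_down y (F : word r -> nat) : \sum_(z <- down y) F z =
  (if lpos y < size y then F (take (lpos y) y ++ drop (lpos y).+1 y) else 0)
  + \sum_(j <- iota 0 (lpos y)) \sum_(i < r) F (set_nth None y j (Some i)).
Proof.
rewrite /down big_cat /del_one /repl_two big_allpairs_dep /=.
under [in RHS]eq_bigr do rewrite -big_enum /=.
by case: ifP; rewrite ?big_seq1 ?big_nil.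
Qed.

Lemma lpos_rcons y a :
  lpos (rcons y a) = if has_one y then lpos y else size y + (a == None).
Proof. by rewrite /lpos -cats1 find_cat /has_one; case: has => //=; case: a. Qed.

Lemma sum_down_rcons y a (F : word r -> nat) :
  \sum_(z <- down (rcons y a)) F z = \sum_(z <- down y) F (rcons z a) +
  (~~ has_one y) * (if a is Some _ then F (twos (size y))
                    else \sum_(i < r) F (rcons (twos (size y)) (Some i))).
Proof.
have sum_set_nth k : k <= size y ->
    \sum_(j <- iota 0 k) \sum_(i < r) F (set_nth None (rcons y a) j (Some i)) =
    \sum_(j <- iota 0 k) \sum_(i < r) F (rcons (set_nth None y j (Some i)) a).
  move=> le_ky; rewrite !big_seq; apply: eq_bigr => j; rewrite mem_iota => /andP [_ lt_jk].
  by apply: eq_bigr => i _; rewrite set_nth_rcons //; lia.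
rewrite !sum_down lpos_rcons size_rcons; case y_one: (has_one y).
  have lt_py : lpos y < size y by rewrite /lpos -has_find.
  have le_py : lpos y <= size y := ltnW lt_py.
  rewrite ltnS le_py lt_py addn0 -cats1 takel_cat // cats1 drop_rcons //.
  by rewrite -rcons_cat sum_set_nth.
rewrite mul1n -(twos_size (negbT y_one)).
have -> : lpos y = size y by apply: hasNfind; rewrite -/(has_one y) y_one.
rewrite ltnn add0n; case: a sum_set_nth => [k|] sum_set_nth /=.
  rewrite addn0 ltnSn sum_set_nth // addnC -cats1 take_size_cat //.
  by rewrite drop_oversize ?cats0 // size_cat addn1.
rewrite addn1 ltnn add0n -addn1 iotaD big_cat /= big_seq1 sum_set_nth //.
by congr (_ + _); apply: eq_bigr => i _; rewrite set_nth_rcons_size.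
Qed.

(* A path from [rcons y a] down to [X] either never acts on the last letter [a]
   ([d_keep]: then [X = rcons x a] and the path is one from [y] to [x]), or it
   first acts on [a] once the prefix has become [twos m] ([d_cross], any bound
   [M > weight y] on [m] will do); [d_touch X m a] counts the paths from
   [rcons (twos m) a] to [X] whose first step acts on [a]. *)
Definition d_touch X m a : nat :=
  if a is Some _ then d X (twos m) else \sum_(i < r) d X (rcons (twos m) (Some i)).

Definition d_keep X y a : nat :=
  ((0 < size X) && (last None X == a)) * d (take (size X).-1 X) y.

Definition d_cross M X y a : nat := \sum_(0 <= m < M) d (twos m) y * d_touch X m a.

Lemma d_keep_rcons x b y a : d_keep (rcons x b) y a = (b == a) * d x y.
Proof. by rewrite /d_keep size_rcons last_rcons /= -cats1 take_size_cat. Qed.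

Lemma d_keep_rec X y a :
  (rcons y a == X) + \sum_(z <- down y) d_keep X z a = d_keep X y a.
Proof.
case/lastP: X => [|x b]; first by rewrite big1 //; case: y.
under eq_bigr do rewrite d_keep_rcons.
by rewrite d_keep_rcons [d x y]dE mulnDr -big_distrr eqseq_rcons mulnb andbC eq_sym.
Qed.

Lemma sum_d_keep_ones X y :
  \sum_(i < r) d_keep X y (Some i) =
    ((0 < size X) && (last None X != None)) * d (take (size X).-1 X) y.
Proof.
rewrite /d_keep -big_distrl /=; congr (_ * _).
case: (0 < size X) => /=; last by rewrite big1.
case: (last None X) => [j|] /=; last by rewrite big1.
rewrite (bigD1 j) //= eqxx big1 // => i ne_ij.
by case: (Some j =P Some i) => // -[E]; rewrite E eqxx in ne_ij.
Qed.

Lemma d_cross_rec M X y a : weight y < M ->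
  \sum_(z <- down y) d_cross M X z a + (~~ has_one y) * d_touch X (size y) a
  = d_cross M X y a.
Proof.
move=> lt_yM; rewrite /d_cross.
under [RHS]eq_bigr do rewrite dE mulnDl.
rewrite big_split /= exchange_big addnC; congr (_ + _); last first.
  by apply: eq_bigr => m _; rewrite big_distrl.
case y_one: (has_one y).
  by rewrite big1 // => m _; case: eqP => // y_twos; rewrite y_twos has_one_twos in y_one.
rewrite mul1n [in RHS](twos_size (negbT y_one)).
transitivity (\sum_(0 <= m < M | m == size y) d_touch X m a).
  by rewrite big_nat1_eq ifT //; have := size_le_weight y; lia.
rewrite big_mkcond; apply: eq_bigr => m _.
by rewrite (inj_eq twos_inj) eq_sym; case: eqP; rewrite ?mul1n.
Qed.

Lemma d_rcons M X y a :
  weight y < M -> d X (rcons y a) = d_keep X y a + d_cross M X y a.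
Proof.
have [n] := ubnP (weight y); elim: n y => // n IH y lt_yn lt_yM.
rewrite dE sum_down_rcons.
have -> : \sum_(z <- down y) d X (rcons z a) =
          \sum_(z <- down y) (d_keep X z a + d_cross M X z a).
  by rewrite !big_seq; apply: eq_bigr => z /weight_down Ez; apply: IH; lia.
rewrite big_split /= -d_keep_rec -(d_cross_rec X a lt_yM).
by rewrite !addnA.
Qed.

Lemma d_cross_eq0 M X y a : weight (rcons y a) <= weight X -> d_cross M X y a = 0.
Proof.
rewrite weight_rcons => le_yX; rewrite /d_cross big1 // => m _.
have [le_my|lt_ym] := leqP (m * 2) (weight y); last first.
  by rewrite d_eq0 ?weight_twos.
rewrite /d_touch; case: a le_yX => [j|] /= le_yX.
  by rewrite (d_eq0 (x := X)) ?muln0 // weight_twos; lia.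
rewrite big1 ?muln0 // => i _.
by rewrite (d_eq0 (x := X)) // weight_rcons weight_twos /=; lia.
Qed.

End LastLetter.

Section Suffix.
Variable r : nat.
Implicit Types (a b : option 'I_r) (x y w v : word r).

Lemma cut0 x : cut x 0 = x.
Proof. by rewrite /cut subn0 take_size. Qed.

Lemma cut_rcons x b l : cut (rcons x b) l.+1 = cut x l.
Proof. by rewrite /cut size_rcons subSS -cats1 takel_cat // leq_subr. Qed.

Lemma h_rcons x y b a :
  h (rcons x b) (rcons y a) = if b == a then (h x y).+1 else 0.
Proof. by rewrite /h !rev_rcons. Qed.

Lemma h_nil_r w : h w [::] = 0.
Proof. by rewrite /h; case: (rev w). Qed.

Lemma h_sym w v : h w v = h v w.
Proof.
rewrite /h; elim: (rev w) (rev v) => [|a s IH] [|b t] //=.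
by rewrite eq_sym IH.
Qed.

Lemma wsub_rcons x y a : wsub (rcons x a) (rcons y a) = wsub x y.
Proof. by rewrite /wsub h_rcons eqxx cut_rcons. Qed.

Lemma ind_rcons x y a : ind (rcons x a) (rcons y a) = ind x y.
Proof. by rewrite /ind !wsub_rcons. Qed.

Lemma drop_h w v l : l <= h w v -> drop (size w - l) w = drop (size v - l) v.
Proof.
elim/last_ind: w v l => [|x b IH] v [|l]; rewrite ?subn0 ?drop_size //.
case/lastP: v => [|y a]; first by rewrite h_nil_r.
rewrite h_rcons; case: eqP => [<-|] //.
rewrite ltnS !size_rcons !subSS => /IH E.
by rewrite !drop_rcons ?leq_subr // E.
Qed.

Lemma nones_cat x y : nones (x ++ y) = nones x + nones y.
Proof. exact: count_cat. Qed.

Lemma nones_twos m : nones (twos r m) = 0.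
Proof. by rewrite /nones count_nseq. Qed.

Lemma cut_twos m l : cut (twos r m) l = twos r (m - l).
Proof. by rewrite /cut size_twos /twos take_nseq // leq_subr. Qed.

Lemma nones_cut_h_twos m y l : l <= h (twos r m) y -> nones (cut y l) = nones y.
Proof.
move=> /drop_h E; rewrite -{2}(cat_take_drop (size y - l) y) nones_cat -E.
by rewrite size_twos /twos drop_nseq -/(twos r _) nones_twos addn0.
Qed.

Lemma ind_twos_l m v : ind (twos r m) v = false.
Proof.
rewrite /ind /wsub cut_twos /twos rev_nseq.
by case: (m - _) => //=; case: (rev (cut v _)).
Qed.

Lemma ind_twos_r m w : ind w (twos r m) = false.
Proof.
rewrite /ind /wsub cut_twos /twos rev_nseq.
by case: (rev (cut w _)) => [|[b|] s] //=; case: (m - _).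
Qed.

Lemma ind_rcons_neq x y b a :
  b != a -> ind (rcons x b) (rcons y a) = (b != None) && (a != None).
Proof.
move=> neq_ba; have neq_ab : a != b by rewrite eq_sym.
rewrite /ind /wsub !h_rcons (negbTE neq_ba) (negbTE neq_ab) !cut0 !rev_rcons.
by case: b neq_ba {neq_ab} => [i|]; case: a => [j|] //=; rewrite andbT.
Qed.

Lemma sproj_letter_eq b a : b != a ->
  (omap (fun _ => ord0 : 'I_1) b == omap (fun _ => ord0) a) = (b != None) && (a != None).
Proof. by case: b => [i|]; case: a => [j|]. Qed.

Lemma sproj_rcons x b : sproj (rcons x b) = rcons (sproj x) (omap (fun _ => ord0) b).
Proof. exact: map_rcons. Qed.

Lemma sproj_twos m : sproj (twos r m) = twos 1 m.
Proof. by rewrite /sproj /twos map_nseq. Qed.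

Lemma weight_sproj x : weight (sproj x) = weight x.
Proof. by elim: x => //= -[a|] x IH; rewrite /weight /= -!/(weight _) IH. Qed.

Lemma size_sproj x : size (sproj x) = size x.
Proof. exact: size_map. Qed.

End Suffix.

Lemma d_keep_sproj_one r (X : word r) (y : word 1) :
  d_keep (sproj X) y (Some ord0) =
    ((0 < size X) && (last None X != None)) * d (sproj (take (size X).-1 X)) y.
Proof.
rewrite /d_keep size_sproj /sproj (last_map _ X None) map_take.
by case: (last None X).
Qed.

Local Open Scope ring_scope.

Section Formula.
Variable r : nat.
Implicit Types (a b : option 'I_r) (u x y w v X : word r).
Local Notation q := (r%:R : rat).

Definition d1_cut w v l : rat := (d (sproj (cut w l)) (sproj (cut v l)))%:R.

Definition expo w v u : int := (size v)%:Z - (size w)%:Z - (nones u)%:Z.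

Lemma d1_cut_rcons x y b a l : d1_cut (rcons x b) (rcons y a) l.+1 = d1_cut x y l.
Proof. by rewrite /d1_cut !cut_rcons. Qed.

Definition d_formula w v : Prop :=
  (ind w v ->
     (d w v)%:R = \sum_(0 <= l < (h w v).+1)
                    (d1_cut w v l - d1_cut w v l.+1) * q ^ expo w v (cut v l))
  /\
  (~~ ind w v ->
     (d w v)%:R = \sum_(0 <= l < h w v)
                    (d1_cut w v l - d1_cut w v l.+1) * q ^ expo w v (cut v l)
                  + (d (sproj (wsub w v)) (sproj (wsub v w)))%:R
                    * q ^ expo w v (wsub v w)).

Lemma sum_telescope (V : zmodType) (f : nat -> V) n :
  \sum_(0 <= l < n) (f l - f l.+1) + f n = f 0.
Proof.
rewrite (telescope_sumr_eq (fun l => - f l)) // => [|l _]; last by rewrite opprK addrC.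
by rewrite opprK addrAC addNr add0r.
Qed.

Lemma d_formula_nind w v : d_formula w v -> ~~ ind w v ->
  (forall l, (l <= h w v)%N -> nones (cut v l) = nones v) ->
  (d w v)%:R = (d (sproj w) (sproj v))%:R * q ^ expo w v v.
Proof.
move=> [_ formula_nind] nind nones_cut; rewrite formula_nind //.
rewrite /wsub (h_sym v w) /expo (nones_cut _ (leqnn _)).
under eq_big_nat => l /andP [_ lt_lh] do rewrite nones_cut ?(ltnW lt_lh) //.
by rewrite -big_distrl -mulrDl sum_telescope /d1_cut !cut0.
Qed.

Lemma d_twos_l m y : d_formula (twos r m) y ->
  (d (twos r m) y)%:R =
    (d (twos 1 m) (sproj y))%:R * q ^ ((size y)%:Z - m%:Z - (nones y)%:Z).
Proof.
move=> formula_my; rewrite (d_formula_nind formula_my) ?ind_twos_l //.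
  by rewrite sproj_twos /expo size_twos.
by move=> l; apply: nones_cut_h_twos.
Qed.

Lemma d_twos_r m X : d_formula X (twos r m) ->
  (d X (twos r m))%:R = (d (sproj X) (twos 1 m))%:R * q ^ (m%:Z - (size X)%:Z).
Proof.
move=> formula_Xm; rewrite (d_formula_nind formula_Xm) ?ind_twos_r //.
  by rewrite sproj_twos /expo size_twos nones_twos subr0.
by move=> l _; rewrite cut_twos !nones_twos.
Qed.

End Formula.

Section CrossScaling.
Variable r : nat.
Hypothesis r_gt0 : (0 < r)%N. (* needed to add integer exponents of r *)
Variable n : nat.
Hypothesis formula_lt : forall w v : word r, (weight v < n)%N -> d_formula w v.
Implicit Types (a : option 'I_r) (y X : word r).
Local Notation q := (r%:R : rat).

Let q_neq0 : q != 0. Proof. by rewrite pnatr_eq0 -lt0n. Qed.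

Lemma sum_d_twos_sproj M m X : (m * 2 < n)%N ->
  ((\sum_(0 <= k < M) d (twos r k) (twos r m) * d X (twos r k))%N%:R : rat) =
    q ^ (m%:Z - (size X)%:Z)
    * (\sum_(0 <= k < M) d (twos 1 k) (twos 1 m) * d (sproj X) (twos 1 k))%N%:R.
Proof.
move=> lt_mn; rewrite !natr_sum mulr_sumr; apply: eq_bigr => k _; rewrite !natrM.
have [le_km|lt_mk] := leqP k m; last first.
  have lt_mk2 : (m * 2 < k * 2)%N by lia.
  by rewrite (d_eq0 (x := twos r k)) ?(d_eq0 (x := twos 1 k)) ?weight_twos ?mul0r ?mulr0.
have lt_kn : (weight (twos r k) < n)%N by rewrite weight_twos; lia.
have lt_twos_m : (weight (twos r m) < n)%N by rewrite weight_twos.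
rewrite (d_twos_l (formula_lt _ lt_twos_m)) (d_twos_r (formula_lt _ lt_kn)).
rewrite sproj_twos size_twos nones_twos subr0 mulrACA mulrC -expfzDr //.
by congr (_ ^ _ * _); lia.
Qed.

Lemma d_touch_sproj m X a : (m * 2 < n)%N ->
  (d_touch X m a)%:R = q ^ (m%:Z + (a == None)%:Z - (size X)%:Z)
                       * (d_touch (sproj X) m (omap (fun _ => ord0) a))%:R.
Proof.
move=> lt_mn; have lt_twos : (weight (twos r m) < n)%N by rewrite weight_twos.
case: a => [j|] /=.
  by rewrite (d_twos_r (formula_lt _ lt_twos)) addr0 mulrC.
have lt_M s : (weight (twos s m) < (m * 2).+1)%N by rewrite weight_twos.
rewrite /d_touch big_ord1 (d_rcons _ _ (lt_M _)) d_keep_sproj_one.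
under eq_bigr do rewrite (d_rcons _ _ (lt_M _)).
rewrite big_split /= sum_d_keep_ones /d_cross /= sum_nat_const card_ord.
have qS : q * q ^ (m%:Z - (size X)%:Z) = q ^ (m%:Z + 1 - (size X)%:Z).
  by rewrite -[X in X * _]expr1z -expfzDr //; congr (_ ^ _); lia.
rewrite !natrD !natrM sum_d_twos_sproj // mulrDr mulrA qS; congr (_ + _).
have [lt0X|] := ltnP 0 (size X); last by rewrite !mul0r mulr0.
case: (last None X != None); last by rewrite !mul0r mulr0.
rewrite !mul1r (d_twos_r (formula_lt _ lt_twos)) size_takel ?leq_pred //.
by rewrite mulrC; congr (_ ^ _ * _); lia.
Qed.

Lemma d_cross_sproj_rgt0 y a w : (weight (rcons y a) <= n)%N ->
  (d_cross (weight y).+1 w y a)%:R = q ^ expo w (rcons y a) (rcons y a)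
    * (d_cross (weight y).+1 (sproj w) (sproj y) (omap (fun _ => ord0) a))%:R.
Proof.
rewrite weight_rcons => le_yan; have lt_yn : (weight y < n)%N.
  by have := dval_gt0 a; lia.
rewrite /d_cross !natr_sum mulr_sumr; apply: eq_bigr => m _; rewrite !natrM.
have [le_my|lt_ym] := leqP (m * 2) (weight y); last first.
  by rewrite (d_eq0 (x := twos r m)) ?(d_eq0 (x := twos 1 m)) ?weight_twos ?weight_sproj
     ?mul0r ?mulr0.
rewrite (d_twos_l (formula_lt _ lt_yn)) (d_touch_sproj _ _ (leq_ltn_trans le_my lt_yn)).
have -> : expo w (rcons y a) (rcons y a) =
  ((size y)%:Z - m%:Z - (nones y)%:Z) + (m%:Z + (a == None)%:Z - (size w)%:Z).
  by rewrite /expo size_rcons -cats1 nones_cat; case: a {le_yan} => [j|] /=; lia.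
by rewrite [in RHS]expfzDr // [_ * r%:R ^ _]mulrC mulrACA.
Qed.

End CrossScaling.

Lemma weight_word0 (w : word 0) : weight w = (size w * 2)%N.
Proof. by elim: w => [|[[]|] w IH] //=; rewrite /weight /= -/(weight _) IH; lia. Qed.

Lemma nones_word0 (w : word 0) : nones w = 0%N.
Proof. by elim: w => [|[[]|] w IH]. Qed.

Lemma d_cross_sproj_r0 (y : word 0) a w :
  (d_cross (weight y).+1 w y a)%:R = (0%:R : rat) ^ expo w (rcons y a) (rcons y a)
    * (d_cross (weight y).+1 (sproj w) (sproj y) (omap (fun _ => ord0) a))%:R.
Proof.
case: a => [[]|] //=; rewrite {1}/d_cross big1 => [|m _]; last first.
  by rewrite /d_touch big_ord0 muln0.
have [le_yw|] := leqP (weight (rcons (sproj y) None)) (weight (sproj w)).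
  by rewrite d_cross_eq0 // mulr0.
rewrite weight_rcons !weight_sproj !weight_word0 /= => lt_wy.
rewrite exp0rz /expo size_rcons nones_word0 (_ : _ == 0 = false) ?mul0r //.
by apply/eqP; lia.
Qed.

Section Induction.
Variables (r : nat) (y : word r) (a : option 'I_r).
Hypothesis formula_lt :
  forall w v : word r, (weight v < weight (rcons y a))%N -> d_formula w v.
Implicit Types (b : option 'I_r) (x w : word r).
Local Notation q := (r%:R : rat).
Local Notation sa := (omap (fun _ => ord0) a).

Lemma d_cross_sproj w :
  (d_cross (weight y).+1 w y a)%:R = q ^ expo w (rcons y a) (rcons y a)
    * (d_cross (weight y).+1 (sproj w) (sproj y) sa)%:R.
Proof.
move: y a w formula_lt; case: r => [|r'] y' a' w lt; first exact: d_cross_sproj_r0.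
exact: (d_cross_sproj_rgt0 (ltn0Sn r') lt).
Qed.

Lemma d_rcons_sproj w :
  (d w (rcons y a))%:R - (d_keep w y a)%:R =
    q ^ expo w (rcons y a) (rcons y a)
    * ((d (sproj w) (sproj (rcons y a)))%:R - (d_keep (sproj w) (sproj y) sa)%:R).
Proof.
have lt_y := ltnSn (weight y).
have lt_sy : (weight (sproj y) < (weight y).+1)%N by rewrite weight_sproj.
rewrite sproj_rcons (d_rcons _ _ lt_y) (d_rcons _ _ lt_sy) !natrD.
by rewrite ![(d_keep _ _ _)%:R + _]addrC !addrK d_cross_sproj.
Qed.

Lemma expo_rcons x b u : expo (rcons x b) (rcons y a) u = expo x y u.
Proof. by rewrite /expo !size_rcons; lia. Qed.

Lemma d_formula_nil_rcons : d_formula [::] (rcons y a).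
Proof.
split=> // _; rewrite big_geq // add0r /wsub h_nil_r cut0 /=.
by have := d_rcons_sproj [::]; rewrite /d_keep /= !subr0 mulrC.
Qed.

Lemma d_formula_rcons_eq x : d_formula (rcons x a) (rcons y a).
Proof.
have [formula_ind formula_nind] := formula_lt x (weight_lt_rcons y a).
have split_l0 : (d (rcons x a) (rcons y a))%:R = (d x y)%:R +
    (d1_cut (rcons x a) (rcons y a) 0 - d1_cut (rcons x a) (rcons y a) 1)
    * q ^ expo x y (cut (rcons y a) 0).
  rewrite -[LHS](subrK (d_keep (rcons x a) y a)%:R) d_rcons_sproj.
  rewrite /d1_cut !cut0 !cut_rcons !cut0 expo_rcons !sproj_rcons !d_keep_rcons.
  by rewrite !eqxx !mul1n addrC mulrC.
rewrite /d_formula h_rcons eqxx ind_rcons !wsub_rcons split_l0.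
rewrite big_nat_recl // [in X in _ /\ X]big_nat_recl //.
under eq_bigr do rewrite !d1_cut_rcons cut_rcons expo_rcons.
under [in X in _ /\ X]eq_bigr do rewrite !d1_cut_rcons cut_rcons expo_rcons.
by rewrite !expo_rcons; split=> [/formula_ind|/formula_nind] ->; rewrite addrC ?addrA.
Qed.

Lemma d_formula_rcons_neq x b : b != a -> d_formula (rcons x b) (rcons y a).
Proof.
move=> neq_ba; have neq_ab : a != b by rewrite eq_sym.
rewrite /d_formula /wsub !h_rcons (negbTE neq_ba) (negbTE neq_ab) !cut0.
rewrite ind_rcons_neq // big_nat1 big_geq // add0r /d1_cut !cut0 !cut_rcons !cut0.
have := d_rcons_sproj (rcons x b).
rewrite d_keep_rcons (negbTE neq_ba) mul0n subr0 [sproj (rcons x b)]sproj_rcons.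
rewrite d_keep_rcons sproj_letter_eq // => ->.
rewrite sproj_rcons; case: (_ && _); split=> // _.
  by rewrite mul1n mulrC.
by rewrite mul0n subr0 mulrC.
Qed.

End Induction.

Lemma d_formula_nil_r r (w : word r) : d_formula w [::].
Proof.
have nind : ind w [::] = false by rewrite /ind; case: (rev _) => [|[]].
rewrite /d_formula nind /wsub h_nil_r !cut0; split=> // _.
rewrite big_geq // add0r /=; case: w {nind} => [|c w]; first by rewrite mulr1.
have lt0w : (0 < weight (c :: w))%N by rewrite /weight /= addn_gt0 dval_gt0.
by rewrite !d_eq0 ?mul0r ?weight_sproj.
Qed.

Lemma d_formula_holds r (w v : word r) : d_formula w v.
Proof.
have [n] := ubnP (weight v); elim: n w v => // n IH w v lt_vn.
case/lastP: v lt_vn => [|y a] lt_yan; first exact: d_formula_nil_r.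
have formula_lt (w' v' : word r) :
    (weight v' < weight (rcons y a))%N -> d_formula w' v'.
  by move=> lt_v'; apply: IH; lia.
case/lastP: w => [|x b]; first exact: d_formula_nil_rcons.
have [->|neq_ba] := eqVneq b a; first exact: d_formula_rcons_eq.
exact: d_formula_rcons_neq.
Qed.

Theorem mainTheorem7 (r : nat) (w v : word r) :
  let hh := h w v in
  let D1 (l : nat) : rat :=
    (d (sproj (cut w l)) (sproj (cut v l)))%:R in
  let ex (u : word r) : int :=
    (size v)%:Z - (size w)%:Z - (nones u)%:Z in
  (ind w v ->
     (d w v)%:R = \sum_(0 <= l < hh.+1)
                    (D1 l - D1 l.+1) * (r%:R : rat) ^ (ex (cut v l)))
  /\
  (~~ ind w v ->
     (d w v)%:R = \sum_(0 <= l < hh)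
                    (D1 l - D1 l.+1) * (r%:R : rat) ^ (ex (cut v l))
                  + (d (sproj (wsub w v)) (sproj (wsub v w)))%:R
                    * (r%:R : rat) ^ (ex (wsub v w))).
Proof. exact: d_formula_holds. Qed.
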